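(* Let $(G;+)$ be a finite abelian group, $n\ge3$, and suppose that $\rho=\{(a_1,\dots,a_n)\in G^n:\ a_1+\dots+a_n=0\}$ is a key relation. Then the order of $G$ is a power of a prime number.
   Context: A unary vector-function is a tuple $\Psi=(\psi_1,\dots,\psi_n)$ of maps $\psi_i:G\to G$ acting coordinatewise; it preserves $\rho$ if $\Psi(\rho)\subseteq\rho$. $\rho\subseteq G^n$ is a key relation if there is $\beta\in G^n\setminus\rho$ (a key tuple) such that every $\alpha\in G^n\setminus\rho$ is mapped to $\beta$ by some unary vector-function preserving $\rho$. *)

From HB Require Import structures.
From mathcomp Require Import all_boot all_order all_algebra.
Set Implicit Arguments. Unset Strict Implicit. Unset Printing Implicit Defensive.
Import GRing.Theory.
Local Open Scope ring_scope.

Definition vapply (G : Type) (n : nat) (Psi : 'I_n -> G -> G)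
  (a : {ffun 'I_n -> G}) : {ffun 'I_n -> G} :=
  [ffun i => Psi i (a i)].

Definition vpreserves (G : Type) (n : nat) (Psi : 'I_n -> G -> G)
  (rho : {ffun 'I_n -> G} -> Prop) : Prop :=
  forall a, rho a -> rho (vapply Psi a).

Definition key_relation (G : Type) (n : nat)
  (rho : {ffun 'I_n -> G} -> Prop) : Prop :=
  exists beta : {ffun 'I_n -> G}, ~ rho beta /\
    forall alpha : {ffun 'I_n -> G}, ~ rho alpha ->
      exists Psi : 'I_n -> G -> G, vpreserves Psi rho /\ vapply Psi alpha = beta.

Definition zero_sum_rel (G : zmodType) (n : nat) (a : {ffun 'I_n -> G}) : Prop :=
  \sum_(i < n) a i = 0.

(* Let Psi preserve the zero-sum relation.  Comparing Psi on a zero-sum tuple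
   with Psi on the zero tuple, the recentred maps h_i x := psi_i x - psi_i 0
   satisfy h_i x + h_j y + h_l z = 0 whenever x + y + z = 0, for distinct
   coordinates i, j, l; since n >= 3 this is a Cauchy equation, so each h_i is
   additive.  Hence if Psi sends (g, 0, ..., 0) to a key tuple beta, the sum s
   of beta equals h_1 g and is killed by the order of g.  Taking g of prime
   order q (Cauchy's theorem) shows that s != 0 has order q for every prime q
   dividing |G|, so only one prime divides |G|. *)

From HB Require Import structures.
From mathcomp Require Import all_boot all_order all_algebra.
From mathcomp Require Import all_fingroup all_solvable.

Set Implicit Arguments. Unset Strict Implicit. Unset Printing Implicit Defensive.
Import GRing.Theory.
Local Open Scope ring_scope.

Definition single (G : zmodType) (n : nat) (i : 'I_n) (x : G) : {ffun 'I_n -> G} :=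
  [ffun k => if k == i then x else 0].

Lemma single_ne (G : zmodType) n (i k : 'I_n) (x : G) : k != i -> single i x k = 0.
Proof. by rewrite ffunE => /negbTE ->. Qed.

Lemma sum_single (G : zmodType) n (i : 'I_n) (x : G) : \sum_k single i x k = x.
Proof.
rewrite (bigD1 i) //= big1 => [|k /single_ne //].
by rewrite ffunE eqxx addr0.
Qed.

Definition killed_by_all_orders (G : zmodType) (s : G) : Prop :=
  forall (g : G) k, g != 0 -> g *+ k = 0 -> s *+ k = 0.

Section ZeroSumPreserver.

Variables (G : zmodType) (n : nat) (Psi : 'I_n -> G -> G).
Hypothesis Psi_zero_sum : vpreserves Psi (@zero_sum_rel G n).

Definition recentred k x := Psi k x - Psi k 0.

Lemma recentred0 k : recentred k 0 = 0.
Proof. exact: subrr. Qed.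

Lemma sum_vapplyE a : \sum_k vapply Psi a k = \sum_k recentred k (a k).
Proof.
have sum_Psi0 : \sum_k Psi k 0 = 0.
  have zero_zero_sum : zero_sum_rel (0 : {ffun 'I_n -> G}).
    by rewrite /zero_sum_rel big1 // => k _; rewrite ffunE.
  have := Psi_zero_sum zero_zero_sum.
  by rewrite /zero_sum_rel; under eq_bigr => k _ do rewrite !ffunE.
rewrite /recentred sumrB sum_Psi0 subr0.
by apply: eq_bigr => k _; rewrite ffunE.
Qed.

Lemma sum_recentred_single i x : \sum_k recentred k (single i x k) = recentred i x.
Proof.
rewrite (bigD1 i) //= big1 => [|k /single_ne ->]; last exact: recentred0.
by rewrite ffunE eqxx addr0.
Qed.

Variables (i j l : 'I_n).
Hypotheses (neq_ij : i != j) (neq_il : i != l) (neq_jl : j != l).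

Lemma recentred_triple x y z :
  x + y + z = 0 -> recentred i x + recentred j y + recentred l z = 0.
Proof.
pose a := single i x + single j y + single l z.
have a_at k : a k = single i x k + single j y k + single l z k by rewrite !ffunE.
move=> xyz0.
have a_zero_sum : zero_sum_rel a.
  by rewrite /zero_sum_rel; under eq_bigr => k _ do rewrite a_at;
    rewrite !big_split /= !sum_single.
have := Psi_zero_sum a_zero_sum; rewrite /zero_sum_rel sum_vapplyE.
have neq_ji : j != i by rewrite eq_sym.
have neq_li : l != i by rewrite eq_sym.
have neq_lj : l != j by rewrite eq_sym.
rewrite (bigD1 i) // (bigD1 j) // (bigD1 l) ?neq_li //= big1 => [|k].
  by rewrite !a_at !ffunE !eqxx !(negbTE neq_ij, negbTE neq_il, negbTE neq_jl,
    negbTE neq_ji, negbTE neq_li, negbTE neq_lj) !addr0 !add0r addrA.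
move=> /andP[/andP[ki kj] kl]; rewrite a_at !single_ne // !addr0.
exact: recentred0.
Qed.

Lemma recentredD x y : recentred i (x + y) = recentred i x + recentred i y.
Proof.
have recentred_j u : recentred j u = - recentred i (- u).
  have := recentred_triple (x := - u) (y := u) (z := 0).
  rewrite addNr addr0 recentred0 addr0 => /(_ erefl) /eqP.
  by rewrite addrC addr_eq0 => /eqP.
have recentred_l u : recentred l u = - recentred i (- u).
  have := recentred_triple (x := - u) (y := 0) (z := u).
  rewrite addr0 addNr recentred0 addr0 => /(_ erefl) /eqP.
  by rewrite addrC addr_eq0 => /eqP.
have := recentred_triple (x := x + y) (y := - x) (z := - y).
rewrite -addrA -opprD subrr => /(_ erefl).
rewrite recentred_j recentred_l !opprK => /eqP.
by rewrite -addrA -opprD subr_eq0 => /eqP.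
Qed.

Lemma recentredMn x k : recentred i (x *+ k) = recentred i x *+ k.
Proof. by elim: k => [|k IHk]; rewrite ?recentred0 // !mulrS recentredD IHk. Qed.

End ZeroSumPreserver.

Lemma zero_sum_key_killed_by_all_orders (G : zmodType) n : (2 < n)%N ->
  key_relation (@zero_sum_rel G n) ->
  exists2 s : G, s != 0 & killed_by_all_orders s.
Proof.
move=> n_gt2 [beta [beta_out beta_key]].
pose i0 : 'I_n := Ordinal (leq_trans (isT : 0 < 3)%N n_gt2).
pose i1 : 'I_n := Ordinal (leq_trans (isT : 1 < 3)%N n_gt2).
pose i2 : 'I_n := Ordinal n_gt2.
exists (\sum_k beta k); first exact/eqP.
move=> g k g_neq0 gk0.
have alpha_out : ~ zero_sum_rel (single i0 g).
  by rewrite /zero_sum_rel sum_single; exact/eqP.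
have [Psi [Psi_pres <-]] := beta_key _ alpha_out.
rewrite (sum_vapplyE Psi_pres) sum_recentred_single.
by rewrite -(recentredMn Psi_pres (j := i1) (l := i2)) // gk0 recentred0.
Qed.

Section KilledByAllOrders.

Variables (G : finZmodType) (s : G).
Hypotheses (s_neq0 : s != 0) (s_killed : killed_by_all_orders s).

Lemma killed_order_eq_prime q : prime q -> (q %| #|G|)%N -> #[s]%g = q.
Proof.
move=> q_prime; rewrite -cardsT => /(Cauchy q_prime)[g _ g_order].
have g_neq0 : g != 0.
  have : #[g]%g != 1%N by rewrite g_order; apply: contraTneq q_prime => ->.
  by rewrite order_eq1.
have s_q : s *+ q = 0.
  by apply: (s_killed g_neq0); rewrite -g_order; exact: expg_order.
apply/(prime_nt_dvdP q_prime); first by rewrite order_eq1.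
by rewrite order_dvdn; apply/eqP.
Qed.

Lemma killed_card_prime_power : exists p k, prime p /\ #|G| = (p ^ k)%N.
Proof.
have s_order_gt1 : (1 < #[s]%g)%N.
  by rewrite ltn_neqAle order_gt0 eq_sym order_eq1 andbT; exact: s_neq0.
have s_order_dvdG : (#[s]%g %| #|G|)%N by rewrite -cardsT order_dvdG ?inE.
have s_order_prime : prime #[s]%g.
  rewrite (killed_order_eq_prime (pdiv_prime s_order_gt1)) ?pdiv_prime //.
  exact: dvdn_trans (pdiv_dvd _) s_order_dvdG.
have [k card_G] : {k | #|G| = (#[s]%g ^ k)%N}.
  apply: p_natP; apply/pnatP => [|q q_prime q_dvdG].
    by rewrite -cardsT cardG_gt0.
  by rewrite inE /= (killed_order_eq_prime q_prime q_dvdG).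
by exists #[s]%g, k.
Qed.

End KilledByAllOrders.

Theorem mainTheorem16 (G : finZmodType) (n : nat) (hn : (3 <= n)%N)
  (hkey : key_relation (@zero_sum_rel G n)) :
  exists p k : nat, prime p /\ #|G| = (p ^ k)%N.
Proof.
have [s s_neq0 s_killed] := zero_sum_key_killed_by_all_orders hn hkey.
exact: killed_card_prime_power s_neq0 s_killed.
Qed.
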